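(* Let $n>2$ be a natural number and let $R$ be a de Groot continuum with two distinct points $b_1,b_2$. Let $Y_n=(\mathbb{Z}(n)\times R)/\rho$, where $\mathbb{Z}(n)=\mathbb{Z}/n\mathbb{Z}$ is discrete and $\rho$ is the equivalence relation whose only nontrivial identifications are $(k+n\mathbb{Z},b_2)\sim(k+1+n\mathbb{Z},b_1)$ for all $k\in\mathbb{Z}$. Then $Y_n$ is a continuum whose homeomorphism group $\mathcal{H}(Y_n)$ is isomorphic to the cyclic group $\mathbb{Z}/n\mathbb{Z}$; the isomorphism is given by letting $m\in\mathbb{Z}$ act via $\rho(k+n\mathbb{Z},x)\mapsto\rho(m+k+n\mathbb{Z},x)$.
   Context: A de Groot continuum (rigid continuum) is a compact connected metric space $R$ with more than one point such that every continuous map $R\to R$ is either the identity map or a constant map. $\mathcal{H}(Y)$ denotes the group of all homeomorphisms of a space $Y$ onto itself. The space $Y_n$ is the realisation of the directed $n$-cycle (Cayley graph of $(\mathbb{Z}(n),\{1+n\mathbb{Z}\})$) obtained by inserting a copy of $R$ into each oriented edge, $b_1$ glued to the origin and $b_2$ to the target. *)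

From HB Require Import structures.
From mathcomp Require Import all_boot all_algebra.
From Stdlib Require Import Reals Classical List.

Local Open Scope R_scope.

Definition topology (X : Type) := (X -> Prop) -> Prop.

Definition is_metric {X : Type} (d : X -> X -> R) : Prop :=
  (forall x y, 0 <= d x y) /\
  (forall x y, d x y = 0 <-> x = y) /\
  (forall x y, d x y = d y x) /\
  (forall x y z, d x z <= d x y + d y z).

Definition metric_open {X : Type} (d : X -> X -> R) : topology X :=
  fun U => forall x, U x -> exists eps, 0 < eps /\ forall y, d x y < eps -> U y.

Definition continuous {X Y : Type} (TX : topology X) (TY : topology Y)
  (f : X -> Y) : Prop :=
  forall V, TY V -> TX (fun x => V (f x)).

Definition compact {X : Type} (TX : topology X) : Prop :=
  forall F : (X -> Prop) -> Prop,
    (forall U, F U -> TX U) ->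
    (forall x, exists U, F U /\ U x) ->
    exists l : list (X -> Prop),
      (forall U, In U l -> F U) /\ (forall x, exists U, In U l /\ U x).

Definition connected {X : Type} (TX : topology X) : Prop :=
  forall U, TX U -> TX (fun x => ~ U x) -> (forall x, U x) \/ (forall x, ~ U x).

Definition metrizable {X : Type} (TX : topology X) : Prop :=
  exists d : X -> X -> R, is_metric d /\ forall U, TX U <-> metric_open d U.

Definition continuum {X : Type} (TX : topology X) : Prop :=
  compact TX /\ connected TX /\ metrizable TX.

Definition de_Groot_continuum {T : Type} (d : T -> T -> R) : Prop :=
  is_metric d /\ compact (metric_open d) /\ connected (metric_open d) /\
  (exists x y : T, x <> y) /\
  forall f : T -> T, continuous (metric_open d) (metric_open d) f ->
    (forall x, f x = x) \/ (exists c, forall x, f x = c).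

Definition discrete {X : Type} : topology X := fun _ => True.

Definition prod_topology {A B : Type} (TA : topology A) (TB : topology B)
  : topology (A * B) :=
  fun U => forall p, U p -> exists (V : A -> Prop) (W : B -> Prop),
     TA V /\ TB W /\ V (fst p) /\ W (snd p) /\
     forall a b, V a -> W b -> U (a, b).

Definition quot {X : Type} (rel : X -> X -> Prop) : Type :=
  { C : X -> Prop | exists x, C = rel x }.

Definition qmap {X : Type} (rel : X -> X -> Prop) (x : X) : quot rel :=
  exist (fun C => exists y, C = rel y) (rel x) (ex_intro (fun y => rel x = rel y) x (@Logic.eq_refl _ (rel x))).

Definition quot_topology {X : Type} (rel : X -> X -> Prop) (TX : topology X)
  : topology (quot rel) :=
  fun V => TX (fun x => V (qmap rel x)).

Definition homeomorphism {X : Type} (TX : topology X) (f : X -> X) : Prop :=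
  exists g : X -> X, (forall x, g (f x) = x) /\ (forall y, f (g y) = y) /\
    continuous TX TX f /\ continuous TX TX g.

Definition rho (n : nat) (T : Type) (b1 b2 : T) (p q : 'Z_n * T) : Prop :=
  p = q \/
  (snd p = b2 /\ snd q = b1 /\ fst q = GRing.add (fst p) (GRing.one _)) \/
  (snd p = b1 /\ snd q = b2 /\ fst p = GRing.add (fst q) (GRing.one _)).

Arguments rho n {T} b1 b2 p q.

Definition Yn (n : nat) (T : Type) (b1 b2 : T) : Type := quot (rho n b1 b2).

Arguments Yn n {T} b1 b2.

Definition Yn_topology (n : nat) (T : Type) (d : T -> T -> R) (b1 b2 : T)
  : topology (Yn n b1 b2) :=
  quot_topology (rho n b1 b2) (prod_topology (@discrete 'Z_n) (metric_open d)).

Arguments Yn_topology n {T} d b1 b2.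

(* Finally, for a continuous injective h and an arc whose image
   avoids J0, the composites collapse j o h on that arc are self-maps of R, hence
   identities or constants by rigidity; they cannot all be constant, so h maps
   the arc onto an arc.  Every arc image misses some vertex, so after a rotation
   this applies to all arcs, and the gluing forces h to be a rotation. *)

From Pilot Require Import Defs.
From HB Require Import structures.
From mathcomp Require Import all_boot all_algebra.
From Stdlib Require Import Reals Classical List Lra Lia.
From mathcomp Require Import zify.
From Stdlib Require Import FunctionalExtensionality PropExtensionality ProofIrrelevance ClassicalEpsilon.
Import GRing.Theory.

Section CyclicSuccessor.
Local Open Scope ring_scope.
Context {n : nat}.
Local Notation N := (Zp_trunc n).+2.

Definition zsucc (k : 'Z_n) : 'Z_n := k + 1.
Definition zpred (k : 'Z_n) : 'Z_n := k - 1.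

Lemma zpredK (k : 'Z_n) : zsucc (zpred k) = k.
Proof. by rewrite /zsucc /zpred subrK. Qed.

Lemma zsucc_inj : injective zsucc.
Proof. exact: addIr. Qed.

Lemma zsucc_neq (k : 'Z_n) : zsucc k <> k.
Proof.
rewrite /zsucc => /(congr1 (fun z => z - k)).
by rewrite addrAC subrr add0r => /eqP; rewrite oner_eq0.
Qed.

Lemma val_zsucc (k : 'Z_n) : (zsucc k : nat) = ((k : nat).+1 %% N)%nat.
Proof. by rewrite /= (modn_small (m := 1)) // addn1. Qed.

Lemma val_zsucc_nonzero (k : 'Z_n) : zsucc k <> 0 -> (zsucc k : nat) = (k : nat).+1.
Proof.
move=> k1_neq0; rewrite val_zsucc modn_small // ltn_neqAle ltn_ord andbT.
apply: contra_notN k1_neq0 => /eqP kN.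
by apply: val_inj; have := val_zsucc k; rewrite kN modnn.
Qed.

Lemma zsucc_ind (P : 'Z_n -> Prop) :
  P 0 -> (forall k, P k -> P (zsucc k)) -> forall k, P k.
Proof.
move=> P0 PS k; rewrite -(natr_Zp k).
by elim: (k : nat) => [//|t IH]; rewrite mulrSr; apply: PS.
Qed.

Hypothesis n_gt2 : (2 < n)%nat.

(* For n > 2 an arc is never two steps away from itself; this makes the
   adjacency of two distinct arcs unambiguous. *)
Lemma zsucc2_neq (k : 'Z_n) : zsucc (zsucc k) <> k.
Proof.
rewrite /zsucc -addrA => /(congr1 (fun z => z - k)); rewrite addrAC subrr add0r.
move=> /(congr1 val) /=.
have : (2 < N)%nat by move: n_gt2; case: n => [|[|[|m]]].
by move: N => M hM; rewrite !modn_small //; lia.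
Qed.

End CyclicSuccessor.

Section MetricFacts.
Local Open Scope R_scope.
Context {X : Type} {dm : X -> X -> R}.
Hypothesis dm_metric : is_metric dm.

Lemma dist_ge0 a b : 0 <= dm a b. Proof. by case: dm_metric. Qed.
Lemma dist_sym a b : dm a b = dm b a. Proof. by case: dm_metric => _ [_ []]. Qed.
Lemma dist_tri a b c : dm a c <= dm a b + dm b c. Proof. by case: dm_metric => _ [_ [_]]. Qed.
Lemma dist_eq0 a b : dm a b = 0 <-> a = b. Proof. by case: dm_metric => _ []. Qed.
Lemma dist_refl a : dm a a = 0. Proof. exact/dist_eq0. Qed.

Lemma dist_gt0 a b : a <> b -> 0 < dm a b.
Proof.
by move=> ab; case: (Rle_lt_or_eq_dec _ _ (dist_ge0 a b)) => // /esym /dist_eq0.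
Qed.

Lemma ball_open x e : metric_open dm (fun y => dm x y < e).
Proof.
move=> y Hy; exists (e - dm x y); split; first lra.
by move=> z Hz; have := dist_tri x y z; lra.
Qed.

Lemma no_isolated_point : connected (metric_open dm) -> (exists a b : X, a <> b) ->
  forall x e, 0 < e -> exists z, z <> x /\ dm x z < e.
Proof.
move=> conn [a [b ab]] x e e_gt0; apply: NNPP => isolated.
have ball_x : forall z, dm x z < e -> z = x.
  by move=> z xz; apply: NNPP => zx; apply: isolated; exists z.
case: (conn (fun z => z = x)).
- by move=> y ->; exists e; split.
- move=> y yx; exists (dm y x); split; first exact: dist_gt0.
  by move=> z yz zx; rewrite zx in yz; lra.
- by move=> all_x; apply: ab; rewrite (all_x a) (all_x b).
- by move=> /(_ x).
Qed.

End MetricFacts.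

Local Open Scope R_scope.

Lemma continuous_dense_eq {X Y : Type} {dX : X -> X -> R} {dY : Y -> Y -> R}
    {D : X -> Prop} {G1 G2 : X -> Y} :
  is_metric dY -> (forall x e, 0 < e -> exists z, D z /\ dX x z < e) ->
  continuous (metric_open dX) (metric_open dY) G1 ->
  continuous (metric_open dX) (metric_open dY) G2 ->
  (forall x, D x -> G1 x = G2 x) -> forall x, G1 x = G2 x.
Proof.
move=> metY dense c1 c2 eqD x; apply: NNPP => neq.
set r := dY (G1 x) (G2 x); have r_gt0 : 0 < r by apply: dist_gt0.
have near (Gi : X -> Y) : continuous (metric_open dX) (metric_open dY) Gi ->
    exists e, 0 < e /\ forall z, dX x z < e -> dY (Gi x) (Gi z) < r / 2.
  move=> ci; have Gx_near : dY (Gi x) (Gi x) < r / 2 by rewrite dist_refl //; lra.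
  exact: (ci _ (ball_open metY (Gi x) (r / 2)) x Gx_near).
have [e1 [e1_gt0 near1]] := near G1 c1.
have [e2 [e2_gt0 near2]] := near G2 c2.
have [z [Dz xz]] := dense x (Rmin e1 e2) (Rmin_glb_lt _ _ _ e1_gt0 e2_gt0).
have := near1 z (Rlt_le_trans _ _ _ xz (Rmin_l _ _)).
have := near2 z (Rlt_le_trans _ _ _ xz (Rmin_r _ _)).
rewrite (eqD z Dz) (dist_sym metY (G2 x)) => ? ?.
by have := dist_tri metY (G1 x) (G2 z) (G2 x); rewrite -/r; lra.
Qed.

Lemma mem_In (A : eqType) (s : list A) (a : A) : a \in s -> In a s.
Proof. by elim: s => [//|b s IH]; rewrite inE => /orP [/eqP ->|/IH]; [left|right]. Qed.

Section GluedArcs.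
Local Open Scope ring_scope.
Variables (n : nat) (T : Type) (b1 b2 : T).
Hypothesis b1_neq_b2 : b1 <> b2.
Local Notation rel := (rho n b1 b2).
Local Notation Yq := (Yn n b1 b2).
Local Notation q := (qmap (rho n b1 b2)).

Lemma rho_sym p p' : rel p p' -> rel p' p.
Proof. by case=> [->|[[? [? ?]]|[? [? ?]]]]; [left|right; right|right; left]. Qed.

Lemma rho_trans p p' p'' : rel p p' -> rel p' p'' -> rel p p''.
Proof.
case: p p' p'' => [k x] [l y] [m z]; rewrite /rho /=.
case=> [[-> ->] //|[[-> [-> ->]]|[-> [-> ->]]]].
- case=> [[<- <-]|[[? _]|[_ [-> /zsucc_inj ->]]]]; by [right; left|case: b1_neq_b2|left].
- case=> [[<- <-]|[[_ [-> ->]]|[? _]]]; by [right; right|left|case: b1_neq_b2].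
Qed.

Lemma qmap_eq p p' : q p = q p' <-> rel p p'.
Proof.
split.
- move=> /(congr1 (@proj1_sig _ _)) /= ->; by left.
- move=> H; have E : rel p = rel p'.
    apply: functional_extensionality => r; apply: propositional_extensionality.
    by split; [apply: rho_trans; apply: rho_sym|apply: rho_trans].
  rewrite /qmap; move: (ex_intro _ p _) (ex_intro _ p' _); rewrite E => e1 e2.
  by rewrite (proof_irrelevance _ e1 e2).
Qed.

Lemma qmap_surj (y : Yq) : exists p, y = q p.
Proof.
case: y => C [p Hp]; exists p; rewrite /qmap; subst C.
by congr exist; apply: proof_irrelevance.
Qed.

Definition rep (y : Yq) : 'Z_n * T :=
  proj1_sig (constructive_indefinite_description _ (qmap_surj y)).

Lemma rep_spec (y : Yq) : y = q (rep y).
Proof. exact: (proj2_sig (constructive_indefinite_description _ (qmap_surj y))). Qed.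

Lemma rep_q p : rel (rep (q p)) p.
Proof. by apply/qmap_eq; rewrite -rep_spec. Qed.

Lemma qmap_ind (P : Yq -> Prop) : (forall k x, P (q (k, x))) -> forall y, P y.
Proof. by move=> H y; rewrite (rep_spec y); case: (rep y). Qed.

Lemma qmap_glue k : q (k, b2) = q (zsucc k, b1).
Proof. by apply/qmap_eq; right; left. Qed.

Lemma qmap_arc_inj k l x : q (k, x) = q (l, x) -> k = l.
Proof.
move/qmap_eq => [[-> //]|[[/= E1 [E2 _]]|[/= E1 [E2 _]]]];
  by case: b1_neq_b2; rewrite -E1 -E2.
Qed.

Lemma qmap_ends_neq k : q (k, b1) <> q (k, b2).
Proof.
move/qmap_eq => [[E]|[[/= E _]|[/= _ [_ E]]]];
  [exact: b1_neq_b2 E|exact: b1_neq_b2 E|exact: zsucc_neq _ (esym E)].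
Qed.

Definition rotate (m : 'Z_n) (y : Yq) : Yq := q (m + (rep y).1, (rep y).2).

Lemma rho_rotate m p p' : rel p p' -> rel (m + p.1, p.2) (m + p'.1, p'.2).
Proof.
case: p p' => [k x] [l y] /=.
case=> [[-> ->]|[[/= E1 [E2 E3]]|[/= E1 [E2 E3]]]]; [by left|right; left|right; right].
- by rewrite /= E1 E2 E3 addrA.
- by rewrite /= E1 E2 E3 addrA.
Qed.

(* Rotations form an action of Z(n) on Y(n), faithful since the vertices
   (m, b1) are distinct. *)
Lemma rotate_q m k x : rotate m (q (k, x)) = q (m + k, x).
Proof. by apply/qmap_eq; apply: (rho_rotate m _ _ (rep_q (k, x))). Qed.

Lemma rotate_add m1 m2 y : rotate (m1 + m2) y = rotate m1 (rotate m2 y).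
Proof. by move: y; apply: qmap_ind => k x; rewrite !rotate_q addrA. Qed.

Lemma rotate0 y : rotate 0 y = y.
Proof. by move: y; apply: qmap_ind => k x; rewrite rotate_q add0r. Qed.

Lemma rotate_index_inj m1 m2 : rotate m1 = rotate m2 -> m1 = m2.
Proof.
move=> /(congr1 (fun f => f (q (0, b1)))); rewrite !rotate_q !addr0.
exact: qmap_arc_inj.
Qed.

(* The cycle Y(n) is cut at the vertex J0 = (0, b1) = (-1, b2). *)
Definition J0 : Yq := q (0, b1).

(* collapse j maps the cut cycle onto the arc j: the arcs before j are sent to
   b1, those after j to b2.  It respects rho away from J0 (collapse_rho). *)
Definition collapse (j : 'Z_n) (p : 'Z_n * T) : T :=
  if p.1 == j then p.2 else if (p.1 < j)%nat then b1 else b2.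

Lemma collapse_glue j l : zsucc l <> 0 -> collapse j (l, b2) = collapse j (zsucc l, b1).
Proof.
move=> /val_zsucc_nonzero; rewrite /collapse -!val_eqE /= => ->.
by move: (l : nat) (j : nat) => a c; repeat case: ifP; move=> *; try done; exfalso; lia.
Qed.

Lemma collapse_rho j p p' : rel p p' -> q p <> J0 -> collapse j p = collapse j p'.
Proof.
have glue_neq0 l : q (l, b2) <> J0 -> zsucc l <> 0.
  by move=> lJ0 l1; apply: lJ0; rewrite qmap_glue l1.
case=> [->//|[[E1 [E2 E3]]|[E1 [E2 E3]]]];
  case: p p' E1 E2 E3 => [k x] [l y] /= -> -> -> pJ0.
- by apply: collapse_glue; apply: glue_neq0.
- by rewrite collapse_glue //; apply: glue_neq0; rewrite qmap_glue.
Qed.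

Lemma collapse_interior j p z : collapse j p = z -> z <> b1 -> z <> b2 -> p = (j, z).
Proof.
case: p => l x; rewrite /collapse /=; case: (l =P j) => [-> -> //|_].
by case: ifP => _ <-.
Qed.

Lemma collapse_separates p p' : (forall j, collapse j p = collapse j p') -> rel p p'.
Proof.
wlog le_pp' : p p' / (p.1 <= p'.1)%nat => [wlog_le same|].
  case: (leqP p.1 p'.1) => [|/ltnW] le; first exact: wlog_le.
  by apply: rho_sym; apply: wlog_le => // j; rewrite same.
case: p p' le_pp' => [k x] [l y] /= le_kl same.
have := same k; have := same l; rewrite /collapse /= !eqxx.
have [<- -> _|neq_kl] := eqVneq k l; first by left.
have lt_kl : (k < l)%nat by rewrite ltn_neqAle val_eqE neq_kl le_kl.
rewrite lt_kl (leq_gtF le_kl) => b1y xb2; subst x y.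
have [l_succ|l_far] := eqVneq (l : nat) (k : nat).+1.
  have -> : l = zsucc k.
    by apply: val_inj; have := val_zsucc k; rewrite -l_succ modn_small.
  by right; left.
have lt_kl1 : ((k : nat).+1 < l)%nat by rewrite ltn_neqAle eq_sym l_far lt_kl.
have j_val : (inord (k : nat).+1 : 'Z_n) = (k : nat).+1 :> nat.
  by rewrite inordK // (ltn_trans lt_kl1 (ltn_ord l)).
have := same (inord (k : nat).+1); rewrite /collapse /= -!val_eqE /= j_val.
move: (k : nat) (l : nat) lt_kl1 => a c ac.
by repeat case: ifP => ?; try (exfalso; lia); move/b1_neq_b2.
Qed.

Section Topology.
Local Open Scope R_scope.
Variable d : T -> T -> R.
Hypothesis n_gt2 : (2 < n)%nat.
Hypothesis d_metric : is_metric d.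
Local Notation QT := (Yn_topology n d b1 b2).

Definition beta := d b1 b2.

Lemma beta_gt0 : 0 < beta.
Proof. exact: dist_gt0. Qed.

(* The distance on Z(n) x R inducing the topology of Y(n): inside an arc it is
   d, between consecutive arcs it runs through the common vertex, and arcs that
   are not adjacent (n > 2 makes adjacency unambiguous) are at distance beta. *)
Definition del (p p' : 'Z_n * T) : R :=
  if p.1 == p'.1 then Rmin (d p.2 p'.2) beta
  else if p'.1 == zsucc p.1 then Rmin (d p.2 b2 + d p'.2 b1) beta
  else if p.1 == zsucc p'.1 then Rmin (d p.2 b1 + d p'.2 b2) beta
  else beta.

(* case_arcs resolves the adjacency tests in del, discarding the impossible
   configurations; case_min unfolds the caps. *)
Ltac case_arcs := repeat (match goal with |- context[ ?a == ?b ] =>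
   let E := fresh "E" in case: (a =P b) => E end);
  repeat match goal with
  | H : ?a = ?a |- _ => clear H
  | H : ?a <> ?a |- _ => exfalso; exact: (H erefl)
  | H : zsucc ?a = ?a |- _ => exfalso; exact: (zsucc_neq _ H)
  | H : ?a = zsucc ?a |- _ => exfalso; exact: (zsucc_neq _ (esym H))
  | H : zsucc (zsucc ?a) = ?a |- _ => exfalso; exact: (zsucc2_neq n_gt2 _ H)
  | H : ?a = zsucc (zsucc ?a) |- _ => exfalso; exact: (zsucc2_neq n_gt2 _ (esym H))
  | H : zsucc ?a = zsucc ?b |- _ => apply zsucc_inj in H
  | H : ?x = _ |- _ => is_var x; subst x
  | H : _ = ?x |- _ => is_var x; subst x
  end.

Ltac case_min := unfold Rmin in *; repeat match goal with
  | |- context[Rle_dec ?a ?b] => destruct (Rle_dec a b)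
  | H : context[Rle_dec ?a ?b] |- _ => destruct (Rle_dec a b) end.

Lemma del_sym p p' : del p p' = del p' p.
Proof.
case: p p' => [k x] [l y]; rewrite /del /=.
by case_arcs; have := dist_sym d_metric x y; case_min; lra.
Qed.

Lemma del_ge0 p p' : 0 <= del p p'.
Proof.
case: p p' => [k x] [l y]; rewrite /del /=.
have := beta_gt0; have G := dist_ge0 d_metric.
have := G x y; have := G x b1; have := G x b2; have := G y b1; have := G y b2.
by case_arcs; case_min; lra.
Qed.

Lemma del_tri p p' p'' : del p p'' <= del p p' + del p' p''.
Proof.
case: p p' p'' => [k x] [l y] [m z]; rewrite /del /=.
have S := dist_sym d_metric; have Tr := dist_tri d_metric; have G := dist_ge0 d_metric.
have := beta_gt0; rewrite /beta.
have := S x y; have := S x z; have := S y z; have := S b1 b2;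
have := S x b1; have := S x b2; have := S y b1; have := S y b2; have := S z b1; have := S z b2.
have := Tr x y z; have := Tr x y b1; have := Tr x y b2; have := Tr x z b1; have := Tr x z b2;
have := Tr y x b1; have := Tr y x b2; have := Tr z y b1; have := Tr z y b2;
have := Tr b1 x b2; have := Tr b1 y b2; have := Tr b1 z b2;
have := Tr x z y; have := Tr x b1 z; have := Tr x b2 z; have := Tr z x b1; have := Tr z x b2;
have := Tr y z b1; have := Tr y z b2.
have := G x y; have := G y z; have := G x z; have := G x b1; have := G x b2;
have := G y b1; have := G y b2; have := G z b1; have := G z b2.
by intros; case_arcs; case_min; lra.
Qed.

Lemma del_glue k p : del (k, b2) p = del (zsucc k, b1) p.
Proof.
case: p => [l z]; rewrite /del /=.
have S := dist_sym d_metric; have Tr := dist_tri d_metric; have := beta_gt0; rewrite /beta.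
have := S z b1; have := S z b2; have := S b1 b2; have := dist_refl d_metric b1;
have := dist_refl d_metric b2; have := Tr b1 z b2; have := Tr b2 z b1.
have := dist_ge0 d_metric z b1; have := dist_ge0 d_metric z b2.
by intros; case_arcs; case_min; lra.
Qed.

Lemma del_rho_l p p' r : rel p p' -> del p r = del p' r.
Proof.
case=> [->//|[[E1 [E2 E3]]|[E1 [E2 E3]]]];
  case: p p' E1 E2 E3 => [k x] [l y] /= -> -> ->; by rewrite del_glue.
Qed.

Lemma del_rho p p' r r' : rel p p' -> rel r r' -> del p r = del p' r'.
Proof.
by move=> pp' rr'; rewrite (del_rho_l _ _ r pp') del_sym (del_rho_l _ _ p' rr') del_sym.
Qed.

Lemma del_eq0 p p' : del p p' = 0 <-> rel p p'.
Proof.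
split; last first.
  move=> pp'; rewrite (del_rho_l _ _ p' pp') /del eqxx dist_refl //.
  by have := beta_gt0; case_min; lra.
case: p p' => [k x] [l y]; rewrite /del /=.
have G := dist_ge0 d_metric; have := beta_gt0; rewrite /beta.
have := G x y; have := G x b1; have := G x b2; have := G y b1; have := G y b2.
have eq0 a b : d a b = 0 -> a = b := proj1 (dist_eq0 d_metric a b).
move=> g1 g2 g3 g4 g5 B; case_arcs; case_min; move=> del0; try lra.
- by left; congr pair; apply: eq0; lra.
- by right; left; rewrite /=; split; [apply: eq0; lra|split; [apply: eq0; lra|]].
- by right; right; rewrite /=; split; [apply: eq0; lra|split; [apply: eq0; lra|]].
Qed.

Definition dY (y y' : Yq) : R := del (rep y) (rep y').

Lemma dY_q p p' : dY (q p) (q p') = del p p'.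
Proof. by apply: del_rho; apply: rep_q. Qed.

Lemma dY_metric : is_metric dY.
Proof.
split; [by move=> ? ?; apply: del_ge0|split; [|split]].
- by move=> y y'; rewrite /dY del_eq0 -qmap_eq -!rep_spec.
- by move=> y y'; rewrite /dY del_sym.
- by move=> y y' y''; apply: del_tri.
Qed.

Lemma open_slice U k x : QT U -> U (q (k, x)) ->
  exists e, 0 < e /\ forall y, d x y < e -> U (q (k, y)).
Proof.
move=> HU Ux; case: (HU (k, x) Ux) => V [W [_ [HW [Vk [Wx VW]]]]].
case: (HW x Wx) => e [e_gt0 ball_W]; exists e; split=> // y xy.
exact: VW Vk (ball_W y xy).
Qed.

Lemma open_of_slices U : (forall k x, U (q (k, x)) ->
  exists e, 0 < e /\ forall y, d x y < e -> U (q (k, y))) -> QT U.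
Proof.
move=> H [k x] Ux; case: (H k x Ux) => e [e_gt0 ball_U].
exists (fun a => a = k), (fun y => d x y < e); split=> //; split.
  exact: ball_open.
split=> //; split; first by rewrite dist_refl.
by move=> a y -> xy; apply: ball_U.
Qed.

Lemma slice_continuous k : continuous (metric_open d) QT (fun x => q (k, x)).
Proof.
by move=> V HV x Vx; case: (open_slice V k x HV Vx) => e [? ?]; exists e.
Qed.

(* A neighbourhood of the vertex (k, b2) contains a del-ball around it: it
   meets both arcs k and k + 1 in balls around their common end. *)
Lemma open_del_ball_vertex U k : QT U -> U (q (k, b2)) ->
  exists e, 0 < e /\ forall p', del (k, b2) p' < e -> U (q p').
Proof.
move=> HU Uk; have Uk' : U (q (zsucc k, b1)) by rewrite -qmap_glue.
case: (open_slice U k b2 HU Uk) => e1 [e1_gt0 ball1].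
case: (open_slice U (zsucc k) b1 HU Uk') => e2 [e2_gt0 ball2].
have B := beta_gt0.
exists (Rmin e1 (Rmin e2 beta)); split; first by case_min; lra.
move=> [l z]; rewrite /del /=.
have := dist_ge0 d_metric z b2; have := dist_sym d_metric z b1;
have := dist_refl d_metric b2; have := dist_sym d_metric b2 b1.
move=> g1 g2 g3 g4; case_arcs; rewrite /beta in B *; case_min; move=> Hl; try lra.
all: first [by apply: ball1; lra | by apply: ball2; lra].
Qed.

Lemma open_del_ball U p : QT U -> U (q p) ->
  exists e, 0 < e /\ forall p', del p p' < e -> U (q p').
Proof.
move=> HU; case: p => k x.
case: (classic (x = b2)) => [->|x_b2]; first exact: open_del_ball_vertex.
case: (classic (x = b1)) => [->|x_b1].
  rewrite -(zpredK k) -qmap_glue => /(open_del_ball_vertex U _ HU) [e [e_gt0 ball]].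
  by exists e; split=> // p' Hp'; apply: ball; rewrite del_glue.
move=> Ux; case: (open_slice U k x HU Ux) => e1 [e1_gt0 ball1].
have B := beta_gt0.
have P1 := dist_gt0 d_metric _ _ x_b1; have P2 := dist_gt0 d_metric _ _ x_b2.
exists (Rmin e1 (Rmin (d x b1) (Rmin (d x b2) beta))); split; first by case_min; lra.
move=> [l z]; rewrite /del /=.
have := dist_ge0 d_metric z b2; have := dist_ge0 d_metric z b1.
move=> g1 g2; case_arcs; rewrite /beta in B *; case_min; move=> Hl; try lra.
all: by apply: ball1; lra.
Qed.

Lemma Yn_topology_metric U : QT U <-> metric_open dY U.
Proof.
split.
- move=> HU y Uy; rewrite (rep_spec y) in Uy.
  case: (open_del_ball U _ HU Uy) => e [e_gt0 ball]; exists e; split=> // y' yy'.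
  by rewrite (rep_spec y'); apply: ball.
- move=> HU; apply: open_of_slices => k x Ux.
  case: (HU _ Ux) => e [e_gt0 ball]; have B := beta_gt0.
  exists (Rmin e beta); split; first by case_min; lra.
  by move=> y xy; apply: ball; rewrite dY_q /del /= eqxx; case_min; lra.
Qed.

Lemma rotate_continuous m : continuous QT QT (rotate m).
Proof.
move=> V HV; apply: open_of_slices => k x; rewrite rotate_q => Vx.
case: (open_slice V _ x HV Vx) => e [e_gt0 ball]; exists e; split=> // y xy.
by rewrite rotate_q; apply: ball.
Qed.

Lemma rotate_homeomorphism m : homeomorphism QT (rotate m).
Proof.
exists (rotate (GRing.opp m)); split; [|split; [|split]]; try exact: rotate_continuous.
- by move=> y; rewrite -rotate_add addNr rotate0.
- by move=> y; rewrite -rotate_add addrN rotate0.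
Qed.

Hypothesis d_compact : Defs.compact (metric_open d).

(* A single arc, a continuous image of the compact R, is covered by finitely
   many members of an open cover of Y(n). *)
Lemma arc_finite_subcover (F : (Yq -> Prop) -> Prop) k :
  (forall U, F U -> QT U) -> (forall y, exists U, F U /\ U y) ->
  exists L, (forall U, In U L -> F U) /\ forall x, exists U, In U L /\ U (q (k, x)).
Proof.
move=> F_open F_cover.
pose FT W := exists U, F U /\ W = (fun x => U (q (k, x))).
have [l [l_FT l_cover]] : exists l : list (T -> Prop),
    (forall W, In W l -> FT W) /\ (forall x, exists W, In W l /\ W x).
  apply: d_compact.
  - by move=> W [U [FU ->]]; apply: slice_continuous; apply: F_open.
  - move=> x; case: (F_cover (q (k, x))) => U [FU Ux].
    by exists (fun x => U (q (k, x))); split=> //; exists U.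
have [L [L_F L_lift]] : exists L, (forall U, In U L -> F U) /\
    forall W, In W l -> exists U, In U L /\ W = (fun x => U (q (k, x))).
  elim: l l_FT {l_cover} => [|W l IH] l_FT; first by exists nil.
  case: IH => [W' HW'|L [L_F L_lift]]; first by apply: l_FT; right.
  case: (l_FT W (or_introl erefl)) => U [FU EU].
  exists (U :: L); split; first by move=> U' [<-|/L_F].
  move=> W' [<-|/L_lift [U' [H1 H2]]]; first by exists U; split=> //; left.
  by exists U'; split=> //; right.
exists L; split=> // x.
case: (l_cover x) => W [HW Wx]; case: (L_lift W HW) => U [HU EU].
by exists U; split=> //; rewrite EU in Wx.
Qed.

(* Y(n) is compact: it is the union of the n compact arcs. *)
Lemma Yn_compact : Defs.compact QT.
Proof.
move=> F F_open F_cover.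
have arcs_cover (ks : list 'Z_n) : exists L, (forall U, In U L -> F U) /\
    forall k, In k ks -> forall x, exists U, In U L /\ U (q (k, x)).
  elim: ks => [|k ks [L [L_F L_cover]]]; first by exists nil.
  case: (arc_finite_subcover F k F_open F_cover) => L' [L'_F L'_cover].
  exists (L ++ L'); split; first by move=> U /in_app_iff [/L_F|/L'_F].
  move=> k' [<- x|Hk x].
    by case: (L'_cover x) => U [? ?]; exists U; split=> //; apply/in_app_iff; right.
  by case: (L_cover k' Hk x) => U [? ?]; exists U; split=> //; apply/in_app_iff; left.
case: (arcs_cover (enum 'Z_n)) => L [L_F L_cover]; exists L; split=> //.
by apply: qmap_ind => k x; apply: L_cover; apply: mem_In; rewrite mem_enum.
Qed.

Hypothesis d_connected : connected (metric_open d).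

(* Y(n) is connected: each arc is connected and consecutive arcs meet. *)
Lemma Yn_connected : connected QT.
Proof.
move=> U HU HC.
have arc_dichotomy k : (forall x, U (q (k, x))) \/ (forall x, ~ U (q (k, x))).
  exact: d_connected _ (slice_continuous k _ HU) (slice_continuous k _ HC).
case: (classic (U J0)) => U0; [left|right]; apply: qmap_ind;
  apply: zsucc_ind => [|k IH].
- by case: (arc_dichotomy GRing.zero) => // /(_ b1).
- by case: (arc_dichotomy (zsucc k)) => // /(_ b1); rewrite -qmap_glue => /(_ (IH b2)).
- by case: (arc_dichotomy GRing.zero) => // /(_ b1).
- by case: (arc_dichotomy (zsucc k)) => // /(_ b1); rewrite -qmap_glue => /(IH b2).
Qed.

Lemma Yn_continuum : continuum QT.
Proof.
split; first exact: Yn_compact.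
split; first exact: Yn_connected.
by exists dY; split; [apply: dY_metric|apply: Yn_topology_metric].
Qed.

Lemma open_complement_point c : QT (fun y => y <> c).
Proof.
apply/Yn_topology_metric => y yc; exists (dY y c).
split; first exact: (dist_gt0 dY_metric _ _ yc).
by move=> y' yy' y'c; rewrite y'c in yy'; lra.
Qed.

Lemma collapse_arc_continuous (h : Yq -> Yq) k j : continuous QT QT h ->
  (forall x, h (q (k, x)) <> J0) ->
  continuous (metric_open d) (metric_open d) (fun x => collapse j (rep (h (q (k, x))))).
Proof.
move=> hc hk U HU.
have collapse_q p : q p <> J0 -> collapse j (rep (q p)) = collapse j p.
  by move=> pJ0; apply: collapse_rho; [apply: rep_q|rewrite -rep_spec].
pose O y := y <> J0 /\ U (collapse j (rep y)).
have O_open : QT O.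
  apply: open_of_slices => l x [xJ0 Ux]; rewrite collapse_q // in Ux.
  case: (open_slice _ l x (open_complement_point J0) xJ0) => e1 [e1_gt0 ball1].
  have [e2 [e2_gt0 ball2]] : exists e2, 0 < e2 /\ forall y, d x y < e2 -> U (collapse j (l, y)).
    move: Ux; rewrite /collapse /=; case: ifP => _ Ux; first exact: HU x Ux.
    by exists 1; split=> //; lra.
  exists (Rmin e1 e2); split; first exact: Rmin_glb_lt.
  move=> y xy; have xy1 := Rlt_le_trans _ _ _ xy (Rmin_l _ _).
  have xy2 := Rlt_le_trans _ _ _ xy (Rmin_r _ _).
  by split; [exact: ball1|rewrite collapse_q; [exact: ball2|exact: ball1]].
have -> : (fun x => U (collapse j (rep (h (q (k, x)))))) = (fun x => O (h (q (k, x)))).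
  apply: functional_extensionality => x; apply: propositional_extensionality.
  by split=> [|[]]; [split|].
exact: slice_continuous k _ (hc O O_open).
Qed.

Lemma interior_dense x e : 0 < e -> exists z, (z <> b1 /\ z <> b2) /\ d x z < e.
Proof.
move=> e_gt0.
case: (classic (x <> b1 /\ x <> b2)) => [x_int|x_end]; first by exists x; rewrite dist_refl.
have two_points : exists a b : T, a <> b by exists b1, b2.
have [z [zx xz]] := no_isolated_point d_metric d_connected two_points x
  (Rmin e beta) (Rmin_glb_lt _ _ _ e_gt0 beta_gt0).
exists z; split; last exact: Rlt_le_trans _ _ _ xz (Rmin_l _ _).
have xz_beta := Rlt_le_trans _ _ _ xz (Rmin_r _ _).
have : x = b1 \/ x = b2 by apply: NNPP => H; apply: x_end; split=> E; apply: H; [left|right].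
case=> ex; rewrite ex in zx xz_beta; split=> // E; rewrite E /beta in xz_beta;
  rewrite ?(dist_sym d_metric b2 b1) in xz_beta; lra.
Qed.

Lemma arc_maps_eq (G1 G2 : T -> Yq) :
  continuous (metric_open d) QT G1 -> continuous (metric_open d) QT G2 ->
  (forall x, x <> b1 -> x <> b2 -> G1 x = G2 x) -> forall x, G1 x = G2 x.
Proof.
have to_metric G : continuous (metric_open d) QT G ->
    continuous (metric_open d) (metric_open dY) G.
  by move=> cG V /Yn_topology_metric; apply: cG.
move=> c1 c2 eq_int; apply: (continuous_dense_eq dY_metric interior_dense).
- exact: to_metric.
- exact: to_metric.
- by move=> x []; apply: eq_int.
Qed.

Hypothesis d_rigid : forall f : T -> T, continuous (metric_open d) (metric_open d) f ->
  (forall x, f x = x) \/ (exists c, forall x, f x = c).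

(* A continuous injective map of Y(n) maps an arc whose image avoids J0 onto an
   arc, preserving the parameter: otherwise every collapse of the image would be
   constant, and since the collapses separate points the arc would be crushed. *)
Lemma arc_rigid_J0 (h : Yq -> Yq) k : continuous QT QT h -> injective h ->
  (forall x, h (q (k, x)) <> J0) -> exists j, forall x, h (q (k, x)) = q (j, x).
Proof.
move=> hc hinj hk.
pose F j x := collapse j (rep (h (q (k, x)))).
case: (classic (exists j, forall x, F j x = x)) => [[j Fj_id]|no_id].
  exists j; apply: (arc_maps_eq (fun x => h (q (k, x))) (fun x => q (j, x))).
  - by move=> V HV; exact: slice_continuous k _ (hc V HV).
  - exact: slice_continuous.
  - move=> x xb1 xb2; rewrite (rep_spec (h _)).
    by rewrite (collapse_interior _ _ _ (Fj_id x) xb1 xb2).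
have F_const j : exists c, forall x, F j x = c.
  case: (d_rigid _ (collapse_arc_continuous h k j hc hk)) => // F_id.
  by case: no_id; exists j.
exfalso; apply: (qmap_ends_neq k); apply: hinj.
rewrite (rep_spec (h (q (k, b1)))) (rep_spec (h (q (k, b2)))); apply/qmap_eq.
apply: collapse_separates => j; case: (F_const j) => c Fc.
by have := Fc b1; have := Fc b2; rewrite /F => -> ->.
Qed.

Section ContinuousInjections.
Local Open Scope ring_scope.
Variable h : Yq -> Yq.
Hypotheses (h_cont : continuous QT QT h) (h_inj : injective h).

Definition misses_vertex k := exists i, forall x, h (q (k, x)) <> q (i, b1).

(* Rotating the missed vertex to J0 reduces to arc_rigid_J0. *)
Lemma arc_rigid k : misses_vertex k -> exists j, forall x, h (q (k, x)) = q (j, x).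
Proof.
case=> i hk; pose h' y := rotate (- i) (h y).
have h'_cont : continuous QT QT h'.
  by move=> V HV; exact: h_cont _ (rotate_continuous (- i) V HV).
have h'_inj : injective h'.
  by move=> y y' /(congr1 (rotate i)); rewrite /h' -!rotate_add addrN !rotate0 => /h_inj.
case: (arc_rigid_J0 h' k h'_cont h'_inj) => [x|j h'k].
  rewrite /h' /J0 => /(congr1 (rotate i)).
  by rewrite -rotate_add addrN rotate0 rotate_q addr0; apply: hk.
by exists (i + j) => x; rewrite -rotate_q -h'k /h' -rotate_add addrN rotate0.
Qed.

(* If the arc k + 1 misses a vertex, so does the arc k: it misses the far end
   of the image of the arc k + 1 (here n > 2 is used). *)
Lemma misses_vertex_pred k : misses_vertex (zsucc k) -> misses_vertex k.
Proof.
move/arc_rigid => [s hs]; exists (zsucc s) => x hx.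
have : h (q (k, x)) = h (q (zsucc k, b2)) by rewrite hx hs qmap_glue.
move/h_inj/qmap_eq => [/(congr1 fst) /= E|[[/= _ [E _]]|[/= _ [_ E]]]].
- exact: zsucc_neq _ (esym E).
- exact: b1_neq_b2 (esym E).
- exact: zsucc2_neq n_gt2 _ (esym E).
Qed.

(* Two distinct arcs cannot both meet every vertex: their images would share
   the two vertices 0 and 1, while distinct arcs meet in at most one point. *)
Lemma hits_all_vertices_unique k1 k2 : ~ misses_vertex k1 -> ~ misses_vertex k2 -> k1 = k2.
Proof.
have hits k : ~ misses_vertex k -> forall i, exists x, h (q (k, x)) = q (i, b1).
  by move=> hk i; apply: NNPP => none; apply: hk; exists i => x hx; apply: none; exists x.
move=> hit1 hit2; apply: NNPP => k12.
have joined i : exists x y, h (q (k1, x)) = q (i, b1) /\ rel (k1, x) (k2, y).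
  case: (hits _ hit1 i) => x hx; case: (hits _ hit2 i) => y hy.
  by exists x, y; split=> //; apply/qmap_eq; apply: h_inj; rewrite hx hy.
have vertices_neq : q (0, b1) <> q (zsucc 0, b1).
  by move=> /qmap_arc_inj /esym; apply: zsucc_neq.
have [x0 [y0 [h0 r0]]] := joined 0; have [x1 [y1 [h1 r1]]] := joined (zsucc 0).
case: r0 => [[/k12 //]|[[/= A1 [_ A3]]|[/= A1 [_ A3]]]];
case: r1 => [[/k12 //]|[[/= B1 [_ B3]]|[/= B1 [_ B3]]]].
- by apply: vertices_neq; rewrite -h0 -h1 A1 B1.
- by apply: (zsucc2_neq n_gt2 k1); rewrite /zsucc -A3 -B3.
- by apply: (zsucc2_neq n_gt2 k2); rewrite /zsucc -A3 -B3.
- by apply: vertices_neq; rewrite -h0 -h1 A1 B1.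
Qed.

(* Hence every arc misses a vertex: otherwise k and k + 1 would both hit all. *)
Lemma all_arcs_miss_vertex k : misses_vertex k.
Proof.
apply: NNPP => hit; apply: (zsucc_neq k); apply: esym.
by apply: hits_all_vertices_unique => // /misses_vertex_pred.
Qed.

(* Every continuous injective self-map of Y(n) is a rotation: by rigidity each
   arc is mapped onto an arc, and the gluing forces consecutive arcs to go to
   consecutive arcs. *)
Lemma continuous_injective_is_rotation : exists m, h = rotate m.
Proof.
have [m hm] := arc_rigid _ (all_arcs_miss_vertex 0).
exists m; apply: functional_extensionality; apply: qmap_ind.
apply: zsucc_ind => [|k IH] x; first by rewrite hm rotate_q addr0.
have [j hj] := arc_rigid _ (all_arcs_miss_vertex (zsucc k)).
have j_eq : j = m + zsucc k.
  apply: (qmap_arc_inj _ _ b1).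
  by rewrite -hj -qmap_glue IH rotate_q qmap_glue /zsucc addrA.
by rewrite hj j_eq rotate_q.
Qed.

End ContinuousInjections.
End Topology.
End GluedArcs.

Theorem mainTheorem2 (n : nat) (T : Type) (d : T -> T -> R) (b1 b2 : T) :
  (2 < n)%nat ->
  de_Groot_continuum d ->
  b1 <> b2 ->
  continuum (Yn_topology n d b1 b2) /\
  exists phi : 'Z_n -> (Yn n b1 b2 -> Yn n b1 b2),
    (forall (m k : 'Z_n) (x : T),
        phi m (qmap (rho n b1 b2) (k, x)) =
        qmap (rho n b1 b2) (GRing.add m k, x)) /\
    (forall m, homeomorphism (Yn_topology n d b1 b2) (phi m)) /\
    (forall m1 m2 y, phi (GRing.add m1 m2) y = phi m1 (phi m2 y)) /\
    (forall m1 m2, phi m1 = phi m2 -> m1 = m2) /\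
    (forall h, homeomorphism (Yn_topology n d b1 b2) h ->
       exists m, h = phi m).
Proof.
move=> n_gt2 [d_metric [d_compact [d_connected [_ d_rigid]]]] b1_neq_b2.
split; first exact: Yn_continuum.
exists (rotate n T b1 b2); split; first exact: rotate_q.
split; first exact: rotate_homeomorphism.
split; first exact: rotate_add.
split; first exact: rotate_index_inj.
move=> h [g [gh [_ [h_cont _]]]].
exact: continuous_injective_is_rotation h_cont (can_inj gh).
Qed.
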